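(* Consider a GND instance and a reply $\varrho$-oracle ($\varrho\ge1$) for its requests. Let $p^0=(p^0_1,\dots,p^0_N)$ where, for each $i\in[N]$, $p^0_i\in P_i$ is the output of the oracle on $P_i$ with the toll function $\tau_i^0(e)=F_e(w_i(e))$, $e\in E$. Then $C(p^0) \le \varrho \cdot N^{\max_j \alpha_j} \cdot C^*$.
   Context: GND instance: finite resource set $E$; requests $i \in [N]$, each with a reply collection $P_i \subseteq 2^E$ and a weight vector $w_i \in \mathbb{Z}_{\geq 1}^E$; constants $q \in \mathbb{Z}_{\ge1}$, $\alpha_1,\dots,\alpha_q > 1$; for each $e$, $\sigma_e \geq 0$ and $\xi_{e,j} \geq 0$ (at least one $\xi_{e,j}>0$), and cost function $F_e(0)=0$, $F_e(l)=\sigma_e+\sum_j \xi_{e,j} l^{\alpha_j}$ for $l>0$. A feasible solution is $p=(p_1,\dots,p_N)$ with $p_i\in P_i$; load $l_e^p=\sum_{i:e\in p_i} w_i(e)$; total cost $C(p)=\sum_e F_e(l_e^p)$; $C^*$ is the minimum total cost. A reply $\varrho$-oracle, given a reply collection $R$ and tolls $\tau:E\to\mathbb{R}_{>0}$, returns $r\in R$ with $\sum_{e\in r}\tau(e)\le\varrho\sum_{e\in r'}\tau(e)$ for every $r'\in R$. *)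

From mathcomp Require Import all_boot all_order all_algebra.
From mathcomp Require Import reals exp.
Set Implicit Arguments. Unset Strict Implicit. Unset Printing Implicit Defensive.
Import Order.TTheory GRing.Theory Num.Theory.
Local Open Scope ring_scope.

Definition gnd_F (R : realType) (E : finType) (q : nat)
  (alpha : 'I_q -> R) (sigma : E -> R) (xi : E -> 'I_q -> R) (e : E) (l : nat) : R :=
  if l == 0%N then 0
  else sigma e + \sum_(j < q) xi e j * (l%:R `^ alpha j).

Definition gnd_load (E : finType) (N : nat) (w : 'I_N -> E -> nat)
  (p : 'I_N -> {set E}) (e : E) : nat :=
  (\sum_(i < N | e \in p i) w i e)%N.

Definition gnd_cost (R : realType) (E : finType) (N q : nat)
  (alpha : 'I_q -> R) (sigma : E -> R) (xi : E -> 'I_q -> R)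
  (w : 'I_N -> E -> nat) (p : 'I_N -> {set E}) : R :=
  \sum_(e : E) gnd_F alpha sigma xi e (gnd_load w p e).

Definition gnd_feasible (E : finType) (N : nat) (P : 'I_N -> {set {set E}})
  (p : 'I_N -> {set E}) : Prop :=
  forall i, p i \in P i.

Definition oracle_reply (R : realType) (E : finType) (rho : R)
  (Rc : {set {set E}}) (tau : E -> R) (r : {set E}) : Prop :=
  r \in Rc /\ forall r', r' \in Rc -> \sum_(e in r) tau e <= rho * \sum_(e in r') tau e.

(* max_j alpha_j (q >= 1 is assumed wherever this is used). *)
Definition alpha_max (R : realType) (q : nat) (alpha : 'I_q -> R) : R :=
  \big[Num.max/0]_(j < q) alpha j.

(* Write A = max_j alpha_j.  Fix a resource e used by the requests in S, |S| <= N.  By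
   convexity of x |-> x^a for a >= 1 (the power mean inequality), and since sigma_e is
   paid once on the left but |S| times on the right,
     F_e(sum_{i in S} w_i(e)) <= N^(A-1) * sum_{i in S} F_e(w_i(e)),
   while monotonicity of F_e gives sum_{i in S} F_e(w_i(e)) <= N * F_e(sum_{i in S} w_i(e)).
   Summing over e, C(p0) is at most N^(A-1) times the total toll sum_i tau_i^0(p0_i), which
   the oracle bounds by rho * sum_i tau_i^0(p_i) <= rho * N * C(p). *)

From mathcomp Require Import all_boot all_order all_algebra.
From mathcomp Require Import interval_inference classical_sets reals exp convex hoelder.
From mathcomp Require Import ring lra.
Set Implicit Arguments. Unset Strict Implicit. Unset Printing Implicit Defensive.
Import Order.TTheory GRing.Theory Num.Theory.
Local Open Scope ring_scope.

Section power_mean.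
Variable R : realType.

Lemma powR_mean_le (T : Type) (a : R) (r : seq T) (g : T -> R) :
  1 <= a -> (forall i, 0 <= g i) ->
  ((\sum_(i <- r) g i) / (size r)%:R) `^ a <= (\sum_(i <- r) g i `^ a) / (size r)%:R.
Proof.
move=> a_ge1 g_ge0; elim: r => [|x r IH].
  by rewrite !big_nil mul0r powR0 // gt_eqF // (lt_le_trans ltr01 a_ge1).
have [/size0nil->|r_neq0] := eqVneq (size r) 0%N; first by rewrite !big_seq1 !divr1.
rewrite !big_cons /= -addn1 natrD.
set k : R := (size r)%:R; set S := \sum_(i <- r) g i.
have k_gt0 : 0 < k by rewrite ltr0n lt0n.
have t_ge0 : 0 <= k / (k + 1) by rewrite divr_ge0 //; lra.
have t_le1 : k / (k + 1) <= 1 by rewrite ler_pdivrMr; lra.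
(* The mean over [x :: r] is a convex combination of [g x] and the mean over [r]. *)
have -> : (g x + S) / (k + 1) = k / (k + 1) * (S / k) + (1 - k / (k + 1)) * g x.
  by field; rewrite ?gt_eqF //; lra.
have mean_ge0 : 0 <= S / k by rewrite divr_ge0 ?sumr_ge0 // ltW.
have nonneg_mem y : 0 <= y -> y \in (`[0, +oo[%classic : set R).
  by move=> y_ge0; rewrite inE /= in_itv /= y_ge0.
have := convex_powR a_ge1 (Itv01 t_ge0 t_le1) (nonneg_mem _ mean_ge0)
  (nonneg_mem _ (g_ge0 x)).
rewrite !convRE /= => /le_trans; apply.
apply: le_trans (_ : k / (k + 1) * ((\sum_(i <- r) g i `^ a) / k)
                     + (1 - k / (k + 1)) * g x `^ a <= _).
  by rewrite lerD2r ler_wpM2l.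
by rewrite le_eqVlt; apply/orP; left; apply/eqP; field; rewrite gt_eqF //; lra.
Qed.

Lemma powR_sum_le (T : Type) (a : R) (r : seq T) (g : T -> R) :
  1 <= a -> (forall i, 0 <= g i) ->
  (\sum_(i <- r) g i) `^ a <= (size r)%:R `^ (a - 1) * \sum_(i <- r) g i `^ a.
Proof.
move=> a_ge1 g_ge0; have a_gt0 : 0 < a by apply: lt_le_trans a_ge1.
have [/size0nil->|r_neq0] := eqVneq (size r) 0%N.
  by rewrite !big_nil powR0 ?gt_eqF // mulr0.
set n : R := (size r)%:R.
have n_gt0 : 0 < n by rewrite ltr0n lt0n.
have -> : \sum_(i <- r) g i = n * ((\sum_(i <- r) g i) / n).
  by rewrite mulrC divfK // gt_eqF.
rewrite powRM ?divr_ge0 ?sumr_ge0 ?(ltW n_gt0) //.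
apply: le_trans (_ : n `^ a * ((\sum_(i <- r) g i `^ a) / n) <= _).
  by rewrite ler_wpM2l ?powR_ge0 // powR_mean_le.
rewrite -(mulr_powRB1 (ltW n_gt0) a_gt0) le_eqVlt; apply/orP; left; apply/eqP.
by field; rewrite gt_eqF.
Qed.

End power_mean.

Section cost_function.
Variables (R : realType) (E : finType) (q : nat).
Variables (alpha : 'I_q -> R) (sigma : E -> R) (xi : E -> 'I_q -> R).
Hypothesis alpha_ge1 : forall j, 1 <= alpha j.
Hypothesis sigma_ge0 : forall e, 0 <= sigma e.
Hypothesis xi_ge0 : forall e j, 0 <= xi e j.

Local Notation F := (gnd_F alpha sigma xi).

Lemma gnd_F_neq0 e (l : nat) : l != 0%N ->
  F e l = sigma e + \sum_(j < q) xi e j * (l%:R `^ alpha j).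
Proof. by rewrite /gnd_F => /negbTE ->. Qed.

Lemma gnd_F_ge0 e (l : nat) : 0 <= F e l.
Proof.
rewrite /gnd_F; case: eqP => // _.
by rewrite addr_ge0 // sumr_ge0 // => j _; rewrite mulr_ge0 ?powR_ge0.
Qed.

Lemma gnd_F_le e (l l' : nat) : (l <= l')%N -> F e l <= F e l'.
Proof.
have [->|l_neq0] := eqVneq l 0%N; first by rewrite /gnd_F eqxx gnd_F_ge0.
move=> le_ll'; have l'_neq0 : l' != 0%N by rewrite -lt0n (leq_trans _ le_ll') ?lt0n.
rewrite !gnd_F_neq0 // lerD2l ler_sum // => j _; rewrite ler_wpM2l //.
by rewrite ge0_ler_powR ?nnegrE ?ler_nat // (le_trans ler01).
Qed.

Lemma sum_gnd_F_le e (T : Type) (r : seq T) (g : T -> nat) (l : nat) :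
  (\sum_(i <- r) g i <= l)%N -> \sum_(i <- r) F e (g i) <= (size r)%:R * F e l.
Proof.
elim: r => [|x r IH] le_sum_l; first by rewrite big_nil mul0r.
move: le_sum_l; rewrite !big_cons /= -addn1 natrD mulrDl mul1r addrC => le_sum_l.
rewrite lerD ?IH ?gnd_F_le //.
  exact: leq_trans (leq_addl _ _) le_sum_l.
exact: leq_trans (leq_addr _ _) le_sum_l.
Qed.

Lemma gnd_F_sum_le (A : R) (M : nat) e (T : Type) (r : seq T) (g : T -> nat) :
  1 <= A -> (forall j, alpha j <= A) -> (forall i, (0 < g i)%N) ->
  (size r <= M)%N ->
  F e (\sum_(i <- r) g i) <= M%:R `^ (A - 1) * \sum_(i <- r) F e (g i).
Proof.
move=> A_ge1 alpha_leA g_gt0 size_leM.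
case: r size_leM => [|x r'] size_leM; first by rewrite !big_nil /gnd_F eqxx mulr0.
set r := x :: r'.
have M_ge1 : 1 <= M%:R :> R by rewrite ler1n (leq_trans _ size_leM).
have sum_neq0 : (\sum_(i <- r) g i)%N != 0%N.
  by rewrite big_cons -lt0n (leq_trans (g_gt0 x)) ?leq_addr.
rewrite gnd_F_neq0 //; under [X in _ <= _ * X]eq_bigr do rewrite gnd_F_neq0 -?lt0n //.
rewrite big_split /= mulrDr lerD //.
  have sigma_le : sigma e <= \sum_(i <- r) sigma e by rewrite big_cons lerDl sumr_ge0.
  have K_ge1 : 1 <= M%:R `^ (A - 1) :> R.
    by rewrite -[leLHS](powRr0 M%:R) ler_powR // subr_ge0.
  by rewrite (le_trans sigma_le) // ler_peMl // sumr_ge0.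
rewrite exchange_big /= big_distrr /=; apply: ler_sum => j _.
rewrite -big_distrr /= mulrCA ler_wpM2l // natr_sum.
apply: le_trans (powR_sum_le r (alpha_ge1 j) (fun i => ler0n _ (g i))) _.
rewrite ler_wpM2r ?sumr_ge0 //.
apply: (@le_trans _ _ (M%:R `^ (alpha j - 1))).
  by rewrite ge0_ler_powR ?nnegrE ?ler_nat // subr_ge0.
by rewrite ler_powR // lerD2r.
Qed.

End cost_function.

Section gnd_instance.
Variables (R : realType) (E : finType) (N q : nat).
Variables (alpha : 'I_q -> R) (sigma : E -> R) (xi : E -> 'I_q -> R).
Variable w : 'I_N -> E -> nat.
Hypothesis alpha_ge1 : forall j, 1 <= alpha j.
Hypothesis sigma_ge0 : forall e, 0 <= sigma e.
Hypothesis xi_ge0 : forall e j, 0 <= xi e j.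
Hypothesis w_gt0 : forall i e, (0 < w i e)%N.

Local Notation F := (gnd_F alpha sigma xi).
Local Notation C := (gnd_cost alpha sigma xi w).

Definition gnd_toll (i : 'I_N) (r : {set E}) : R := \sum_(e in r) F e (w i e).

Definition gnd_total_toll (p : 'I_N -> {set E}) : R := \sum_(i < N) gnd_toll i (p i).

Lemma gnd_total_tollE p :
  gnd_total_toll p = \sum_(e : E) \sum_(i < N | e \in p i) F e (w i e).
Proof.
rewrite /gnd_total_toll /gnd_toll; under eq_bigr do rewrite big_mkcond.
by rewrite exchange_big; apply: eq_bigr => e _; rewrite [RHS]big_mkcond.
Qed.

Lemma size_filter_ord_le (Q : pred 'I_N) : (size [seq i <- index_enum 'I_N | Q i] <= N)%N.
Proof.
by rewrite size_filter (leq_trans (count_size _ _)) // /index_enum unlock -enumT size_enum_ord.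
Qed.

Lemma gnd_cost_le_total_toll (A : R) p : 1 <= A -> (forall j, alpha j <= A) ->
  C p <= N%:R `^ (A - 1) * gnd_total_toll p.
Proof.
move=> A_ge1 alpha_leA; rewrite gnd_total_tollE mulr_sumr; apply: ler_sum => e _.
rewrite /gnd_load -!(big_filter _ (fun i => e \in p i)).
exact (gnd_F_sum_le alpha_ge1 sigma_ge0 xi_ge0 e A_ge1 alpha_leA (w_gt0^~ e)
  (size_filter_ord_le _)).
Qed.

Lemma gnd_total_toll_le_cost p : gnd_total_toll p <= N%:R * C p.
Proof.
rewrite gnd_total_tollE /gnd_cost mulr_sumr; apply: ler_sum => e _.
rewrite /gnd_load -!(big_filter _ (fun i => e \in p i)).
apply: le_trans (sum_gnd_F_le alpha_ge1 sigma_ge0 xi_ge0 e (leqnn _)) _.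
by rewrite ler_wpM2r ?gnd_F_ge0 ?ler_nat ?size_filter_ord_le.
Qed.

End gnd_instance.

Theorem lemma5p2 (R : realType) (E : finType) (N q : nat)
  (P : 'I_N -> {set {set E}}) (w : 'I_N -> E -> nat)
  (alpha : 'I_q -> R) (sigma : E -> R) (xi : E -> 'I_q -> R) (rho : R)
  (p0 : 'I_N -> {set E}) :
  (0 < q)%N ->
  (forall i e, (1 <= w i e)%N) ->
  (forall j, 1 < alpha j) ->
  (forall e, 0 <= sigma e) ->
  (forall e j, 0 <= xi e j) ->
  (forall e, exists j, 0 < xi e j) ->
  1 <= rho ->
  (forall i, oracle_reply rho (P i)
               (fun e => gnd_F alpha sigma xi e (w i e)) (p0 i)) ->
  forall p, gnd_feasible P p ->
  gnd_cost alpha sigma xi w p0 <=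
    rho * (N%:R `^ alpha_max alpha) * gnd_cost alpha sigma xi w p.
Proof.
move=> q_gt0 w_gt0 alpha_gt1 sigma_ge0 xi_ge0 _ rho_ge1 oracle p p_feasible.
have alpha_ge1 j : 1 <= alpha j by rewrite ltW.
set A := alpha_max alpha.
have alpha_leA j : alpha j <= A by exact: le_bigmax.
have A_ge1 : 1 <= A by apply: le_trans (alpha_ge1 (Ordinal q_gt0)) (alpha_leA _).
have rho_ge0 : 0 <= rho by apply: le_trans rho_ge1.
have oracle_total :
    gnd_total_toll alpha sigma xi w p0 <= rho * gnd_total_toll alpha sigma xi w p.
  by rewrite mulr_sumr; apply: ler_sum => i _; exact: (oracle i).2 _ (p_feasible i).
have -> : rho * N%:R `^ A * gnd_cost alpha sigma xi w p =
          N%:R `^ (A - 1) * (rho * (N%:R * gnd_cost alpha sigma xi w p)).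
  by rewrite -(mulr_powRB1 (ler0n _ N) (lt_le_trans ltr01 A_ge1)); ring.
apply: le_trans (gnd_cost_le_total_toll alpha_ge1 sigma_ge0 xi_ge0 w_gt0 p0 A_ge1 alpha_leA) _.
rewrite ler_wpM2l ?powR_ge0 //; apply: le_trans oracle_total _.
by rewrite ler_wpM2l // gnd_total_toll_le_cost.
Qed.
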